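(* Let $n\ge0$ and $l\ge0$. In $H^*(\operatorname{Gr}_2(\mathbb{R}^\infty);\mathbb{Z}/2)=\mathbb{Z}/2[w_1,w_2]$, $$Q_n(w_1\bar w_{2l}) = w_1\bar w_{2^{n+1}-1+2l}.$$
   Context: $w_1,w_2$ are the Stiefel–Whitney classes of the tautological $2$-plane bundle; $\bar w_k$ are defined by $(1+w_1+w_2)(1+\bar w_1+\bar w_2+\cdots)=1$, with $\bar w_0=1$. $Q_n$ is the Milnor primitive: $Q_0=Sq^1$, $Q_n=[Q_{n-1},Sq^{2^n}]$. *)

From HB Require Import structures.
From mathcomp Require Import all_boot all_order all_algebra.
From mathcomp Require Import mpoly.
Set Implicit Arguments. Unset Strict Implicit. Unset Printing Implicit Defensive.
Import GRing.Theory.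
Local Open Scope ring_scope.

(* H^*(Gr_2(R^oo); Z/2) = Z/2[w1, w2], with w1 = 'X_0 (degree 1), w2 = 'X_1 (degree 2). *)
Definition HGr := {mpoly 'F_2[2]}.
Definition w1 : HGr := 'X_ord0.
Definition w2 : HGr := 'X_ord_max.

Definition wdeg (m : 'X_{1..2}) : nat := (m ord0 + 2 * m ord_max)%N.

Definition wcomp (d : nat) (q : HGr) : HGr :=
  \sum_(m <- msupp q | wdeg m == d) q@_m *: 'X_[m].

(* total Steenrod square, the ring map determined by the Wu formulas
   Sq(w1) = w1 + w1^2,  Sq(w2) = w2 + w1 w2 + w2^2 *)
Definition totalSq (q : HGr) : HGr :=
  comp_mpoly [tuple w1 + w1 ^+ 2; w2 + w1 * w2 + w2 ^+ 2] q.

Definition Sq (i : nat) (p : HGr) : HGr :=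
  \sum_(m <- msupp p) p@_m *: wcomp (wdeg m + i) (totalSq 'X_[m]).

Fixpoint Q (n : nat) (p : HGr) : HGr :=
  match n with
  | 0 => Sq 1 p
  | n'.+1 => Q n' (Sq (2 ^ n'.+1) p) - Sq (2 ^ n'.+1) (Q n' p)
  end.

(* dual classes: (1 + w1 + w2)(1 + wbar_1 + wbar_2 + ...) = 1, i.e.
   wbar_0 = 1 and wbar_k + w1 wbar_{k-1} + w2 wbar_{k-2} = 0 (k >= 1, wbar_{-1} = 0). *)
Fixpoint wbar_pair (k : nat) : HGr * HGr :=
  match k with
  | 0 => (1, - w1)
  | k'.+1 => let: (a, b) := wbar_pair k' in (b, - (w1 * b + w2 * a))
  end.
Definition wbar (k : nat) : HGr := (wbar_pair k).1.

(* Splitting principle: w1 |-> x0 + x1, w2 |-> x0 x1 embeds Z/2[w1, w2] into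
   Z/2[x0, x1] (fundamental theorem of symmetric polynomials) and turns the Wu
   formulas into Sq x = x + x^2 for the degree-one classes x0, x1.  There
   Sq^i x^e = C(e, i) x^(e+i), and since C(e, 2^t) = floor(e / 2^t) mod 2 this
   gives Q_n x^e = e x^(e + 2^(n+1) - 1).  The recurrence of the wbar_k shows
   that w1 wbar_k becomes the power sum x0^(k+1) + x1^(k+1), and Q_n maps the
   odd power sum p_(2l+1) to p_(2l + 2^(n+1)). *)

From HB Require Import structures.
From mathcomp Require Import all_boot all_order all_algebra.
From mathcomp Require Import mpoly ssrcomplements bigenough ring zify.
Set Implicit Arguments.
Unset Strict Implicit.
Unset Printing Implicit Defensive.
Import GRing.Theory BigEnough.

Lemma odd_bin_double a c :
  odd 'C(a.*2, c.*2) = odd 'C(a, c) /\ ~~ odd 'C(a.*2, (c.*2).+1).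
Proof.
elim: a c => [|a IHa] [|c]; rewrite ?bin0 ?bin1 ?odd_double //.
rewrite !doubleS !binS; have [odd_cc even_cc] := IHa c.
have [odd_cSS even_cSS] := IHa c.+1; rewrite doubleS in odd_cSS even_cSS.
rewrite !oddD odd_cc odd_cSS (negbTE even_cc) (negbTE even_cSS) /=.
by case: (odd 'C(a, c)); case: (odd 'C(a, c.+1)).
Qed.

Lemma odd_bin_half a c : odd 'C(a, c.*2) = odd 'C(a./2, c).
Proof.
rewrite -[in LHS](odd_double_half a); case: (odd a) => /=.
  case: c => [|c]; first by rewrite !bin0.
  rewrite add1n doubleS binS oddD (negbTE (odd_bin_double _ _).2) -doubleS.
  by rewrite addbF (odd_bin_double _ _).1.
by rewrite add0n (odd_bin_double _ _).1.
Qed.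

Lemma odd_bin_pow2 t a : odd 'C(a, 2 ^ t) = odd (a %/ 2 ^ t).
Proof.
elim: t a => [|t IHt] a; first by rewrite expn0 bin1 divn1.
by rewrite expnS divnMA divn2 -IHt -odd_bin_half -mul2n.
Qed.

Lemma divn_add_pred_ndvd M k : 0 < M -> ~~ (M %| k) ->
  (k + M - 1) %/ M = (k %/ M).+1.
Proof.
move=> M_gt0 M_ndvd_k; have r_gt0 : 0 < k %% M by rewrite lt0n -/(M %| k).
have -> : k + M - 1 = (k %/ M).+1 * M + (k %% M).-1.
  by rewrite {1}(divn_eq k M) mulSn; lia.
rewrite divnMDl // (divn_small (leq_ltn_trans (leq_pred _) _)) ?addn0 //.
by rewrite ltn_mod.
Qed.

Lemma odd_bin_pow2_addn_pred t k : odd k ->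
  odd 'C(k, 2 ^ t.+1) (+) odd 'C(k + 2 ^ t.+1 - 1, 2 ^ t.+1).
Proof.
move=> odd_k; rewrite !odd_bin_pow2 divn_add_pred_ndvd ?expn_gt0 //=.
  by case: (odd _).
apply: contraL odd_k => /(dvdn_trans (dvdn_exp2l 2 (ltn0Sn t))).
by rewrite expn1 dvdn2 => ->.
Qed.

Local Open Scope ring_scope.

Lemma mulrn_pchar2 (R : nzRingType) (x : R) k :
  2 \in [pchar R] -> x *+ k = x *+ odd k.
Proof.
move=> pcharR2.
by rewrite -mulr_natr -(GRing.natr_mod_pchar pcharR2) modn2 mulr_natr.
Qed.

Lemma comp_mpolyA (R : comNzRingType) n k l (lq : n.-tuple {mpoly R[k]})
    (lr : k.-tuple {mpoly R[l]}) p :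
  (p \mPo lq) \mPo lr = p \mPo [tuple tnth lq i \mPo lr | i < n].
Proof.
rewrite [p \mPo lq]comp_mpolyEX [RHS]comp_mpolyEX raddf_sum.
apply: eq_bigr => m _; rewrite /= comp_mpolyZ !comp_mpolyX rmorph_prod.
by congr (_ *: _); apply: eq_bigr => i _; rewrite rmorphXn tnth_mktuple.
Qed.

Lemma mpoly_lrmorph_eq (R : comNzRingType) n (A : lalgType R)
    (f g : {lrmorphism {mpoly R[n]} -> A}) :
  (forall i, f 'X_i = g 'X_i) -> f =1 g.
Proof.
move=> fg_X p; rewrite (mpolyE p) !linear_sum; apply: eq_bigr => m _.
rewrite !linearZ /= mpolyXE_id !rmorph_prod; congr (_ *: _);
  apply: eq_bigr => i _; rewrite !rmorphXn; congr (_ ^+ _); apply: fg_X.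
Qed.

Section LinearExtension.
Variables (r : nat) (R : comNzRingType) (V : lmodType R).

Definition mlinext (g : 'X_{1..r} -> V) (p : {mpoly R[r]}) : V :=
  \sum_(m <- msupp p) p@_m *: g m.

Lemma mlinextwE g k p : (msize p <= k)%N ->
  mlinext g p = \sum_(m : 'X_{1..r < k}) p@_m *: g m.
Proof.
move=> lt_pk; pose I : subFinType _ := 'X_{1..r < k}.
rewrite /mlinext (big_mksub I) ?msupp_uniq //=; last first.
  by move=> x /msize_mdeg_lt /leq_trans /(_ lt_pk) ->.
by rewrite big_rmcond //= => m /memN_msupp_eq0 ->; rewrite scale0r.
Qed.

Lemma mlinext_is_linear g : linear (mlinext g).
Proof.
move=> c p q /=; pose_big_enough k.
  rewrite !(mlinextwE _ (k := k)) // scaler_sumr -big_split /=.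
  by apply: eq_bigr => m _; rewrite linearP /= scalerDl scalerA.
by close.
Qed.

Lemma mlinextE (f : {linear {mpoly R[r]} -> V}) p :
  f p = mlinext (fun m => f 'X_[m]) p.
Proof.
by rewrite {1}(mpolyE p) linear_sum; apply: eq_bigr => m _; rewrite linearZ.
Qed.

End LinearExtension.

HB.instance Definition _ r (R : comNzRingType) (V : lmodType R) g :=
  GRing.isLinear.Build R {mpoly R[r]} V _ (@mlinext r R V g)
    (@mlinext_is_linear r R V g).

Section MilnorPrimitives.
Variables (V : zmodType) (Sq : nat -> V -> V).

Fixpoint milnorQ (n : nat) (p : V) : V :=
  match n with
  | 0 => Sq 1 p
  | n'.+1 => milnorQ n' (Sq (2 ^ n'.+1) p) - Sq (2 ^ n'.+1) (milnorQ n' p)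
  end.

Hypothesis Sq_zmod_morphism : forall i, zmod_morphism (Sq i).

Lemma milnorQ_zmod_morphism n : zmod_morphism (milnorQ n).
Proof.
elim: n => [|n IHn] p q /=; first exact: Sq_zmod_morphism.
by rewrite Sq_zmod_morphism !IHn Sq_zmod_morphism !opprD !opprK addrACA.
Qed.

Let milnorQ_additive n : {additive V -> V} :=
  HB.pack (milnorQ n)
    (GRing.isZmodMorphism.Build _ _ _ (milnorQ_zmod_morphism n)).

Lemma milnorQD n : {morph milnorQ n : p q / p + q}.
Proof. exact: raddfD (milnorQ_additive n). Qed.

Lemma milnorQMn n k : {morph milnorQ n : p / p *+ k}.
Proof. exact: (@raddfMn _ _ (milnorQ_additive n) k). Qed.

End MilnorPrimitives.

Lemma milnorQ_morph (U V : zmodType) (f : {additive U -> V})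
    (SqU : nat -> U -> U) (SqV : nat -> V -> V) :
  (forall i p, f (SqU i p) = SqV i (f p)) ->
  forall n p, f (milnorQ SqU n p) = milnorQ SqV n (f p).
Proof.
move=> f_Sq; elim=> [|n IHn] p /=; first exact: f_Sq.
by rewrite raddfB IHn !f_Sq IHn.
Qed.

(* Steenrod squares on H^*((RP^oo)^r) = R[x_1, ..., x_r] with every x_i of
   degree 1, so that Sq x_i = x_i + x_i^2 and mdeg is the grading. *)
Section SquaresOfDegreeOneClasses.
Variables (r : nat) (R : comNzRingType).
Implicit Types (p : {mpoly R[r]}).

Definition xtotalSq : {mpoly R[r]} -> {mpoly R[r]} :=
  comp_mpoly [tuple 'X_i + 'X_i ^+ 2 | i < r].
HB.instance Definition _ :=
  GRing.LRMorphism.copy xtotalSq (comp_mpoly [tuple 'X_i + 'X_i ^+ 2 | i < r]).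

Definition xSq (i : nat) : {mpoly R[r]} -> {mpoly R[r]} :=
  mlinext (fun m => pihomog mdeg (mdeg m + i) (xtotalSq 'X_[m])).
HB.instance Definition _ i := GRing.Linear.copy (xSq i)
  (mlinext (fun m => pihomog mdeg (mdeg m + i) (xtotalSq 'X_[m]))).

Lemma xtotalSqX i : xtotalSq 'X_i = 'X_i + 'X_i ^+ 2.
Proof. by rewrite /xtotalSq comp_mpolyXU -tnth_nth tnth_mktuple. Qed.

Lemma xSq_homog d i p :
  p \is d.-homog -> xSq i p = pihomog mdeg (d + i) (xtotalSq p).
Proof.
move=> /dhomogP p_homog; rewrite [in xtotalSq p](mpolyE p).
rewrite (raddf_sum xtotalSq) /= raddf_sum /=; apply: eq_big_seq => m m_supp.
by rewrite !linearZ /= (p_homog m m_supp).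
Qed.

Lemma pihomog_Xn k j d :
  pihomog mdeg d ('X_k ^+ j : {mpoly R[r]}) = if j == d then 'X_k ^+ j else 0.
Proof. by rewrite mpolyXn pihomogX /= mdegMn mdeg1 mul1n. Qed.

Lemma xSq_Xn i k e : xSq i ('X_k ^+ e) = 'X_k ^+ (e + i) *+ 'C(e, i).
Proof.
have Xe_homog : ('X_k ^+ e : {mpoly R[r]}) \is e.-homog.
  by rewrite mpolyXn dhomogX /= mdegMn mdeg1 mul1n.
rewrite (xSq_homog i Xe_homog) rmorphXn /= xtotalSqX.
have -> : ('X_k + 'X_k ^+ 2 : {mpoly R[r]}) ^+ e =
    \sum_(j < e.+1) 'X_k ^+ (e + j) *+ 'C(e, j).
  rewrite exprDn; apply: eq_bigr => j _; rewrite -exprM -exprD.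
  by congr (_ ^+ _ *+ _); have := ltn_ord j; lia.
rewrite raddf_sum /=.
under eq_bigr => j _ do rewrite raddfMn /= pihomog_Xn eqn_add2l.
have [le_ie | lt_ei] := ltnP i e.+1.
  rewrite (bigD1 (Ordinal le_ie)) //= eqxx big1 ?addr0 // => j.
  by rewrite -val_eqE => /negbTE /= ->; rewrite mul0rn.
rewrite bin_small // mulr0n big1 // => j _.
by rewrite ltn_eqF ?mul0rn // (leq_trans (ltn_ord j)).
Qed.

Lemma xSq_zmod_morphism i : zmod_morphism (xSq i).
Proof. exact: raddfB. Qed.

Hypothesis pcharR2 : 2 \in [pchar R].
Let pchar_mpoly : 2 \in [pchar {mpoly R[r]}] :=
  rmorph_pchar (@mpolyC r R) pcharR2.

Lemma xQ_Xn n k e :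
  milnorQ xSq n ('X_k ^+ e) = 'X_k ^+ (e + 2 ^ n.+1 - 1) *+ e.
Proof.
elim: n e => [|n IHn] e /=.
  by rewrite xSq_Xn bin1 expn1 addn2 subn1 addn1.
rewrite xSq_Xn (milnorQMn xSq_zmod_morphism) !IHn raddfMn /= xSq_Xn -!mulrnA.
set M := (2 ^ n.+1)%N; have M_gt0 : (0 < M)%N by rewrite expn_gt0.
have -> : (e + M + M - 1 = e + 2 ^ n.+2 - 1)%N by rewrite expnS -/M; lia.
have -> : (e + M - 1 + M = e + 2 ^ n.+2 - 1)%N by rewrite expnS -/M; lia.
rewrite (oppr_pchar2 pchar_mpoly) -mulrnDr (mulrn_pchar2 _ _ pchar_mpoly).
rewrite [RHS](mulrn_pchar2 _ _ pchar_mpoly); congr (_ *+ nat_of_bool _).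
rewrite oddD !oddM oddD oddX /= addbF.
have [odd_e | _] := boolP (odd e); last by rewrite andbF.
by rewrite andbT; apply: odd_bin_pow2_addn_pred.
Qed.

End SquaresOfDegreeOneClasses.

Arguments xtotalSq {r R}.
Arguments xSq {r R}.

Local Notation x0 := ('X_ord0 : HGr).
Local Notation x1 := ('X_ord_max : HGr).

Lemma pchar_HGr : 2 \in [pchar HGr].
Proof. by apply: (rmorph_pchar (@mpolyC 2 'F_2)); apply: pchar_Fp. Qed.

Definition split2 : HGr -> HGr := comp_mpoly [tuple mesym 2 'F_2 i.+1 | i < 2].
HB.instance Definition _ :=
  GRing.LRMorphism.copy split2 (comp_mpoly [tuple mesym 2 'F_2 i.+1 | i < 2]).

Lemma split2_inj : injective split2.
Proof. exact: msym_fundamental_un. Qed.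

Lemma split2_w1 : split2 w1 = x0 + x1.
Proof.
rewrite /split2 comp_mpolyXU -tnth_nth tnth_mktuple mesym1E.
by rewrite !big_ord_recr big_ord0 /= add0r; congr (_ + 'X__); apply/val_inj.
Qed.

Lemma split2_w2 : split2 w2 = x0 * x1.
Proof.
rewrite /split2 comp_mpolyXU -tnth_nth tnth_mktuple mesymnnE.
by rewrite !big_ord_recr big_ord0 /= mul1r; congr (_ * 'X__); apply/val_inj.
Qed.

HB.instance Definition _ := GRing.LRMorphism.copy totalSq
  (comp_mpoly [tuple w1 + w1 ^+ 2; w2 + w1 * w2 + w2 ^+ 2]).

Lemma wdeg_mnmwgt m : wdeg m = mnmwgt m.
Proof.
rewrite /wdeg /mnmwgt !big_ord_recr big_ord0 /=.
have -> : widen_ord (leqnSn 1) ord_max = ord0 :> 'I_2 by apply: val_inj.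
by rewrite add0n muln1 mulnC.
Qed.

Lemma wcompE d q : wcomp d q = pihomog mnmwgt d q.
Proof. by apply: eq_bigl => m; rewrite wdeg_mnmwgt. Qed.

Lemma totalSq_w1 : totalSq w1 = w1 + w1 ^+ 2.
Proof. by rewrite /totalSq comp_mpolyXU. Qed.

Lemma totalSq_w2 : totalSq w2 = w2 + w1 * w2 + w2 ^+ 2.
Proof. by rewrite /totalSq comp_mpolyXU. Qed.

Lemma split2_totalSq p : split2 (totalSq p) = xtotalSq (split2 p).
Proof.
apply: (@mpoly_lrmorph_eq _ _ _ (split2 \o totalSq) (xtotalSq \o split2)) => i.
have [->|->] : i = ord0 \/ i = ord_max.
  by case: i => [[|[|]]] //= ?; [left|right]; apply/val_inj.
- rewrite /= totalSq_w1 rmorphD rmorphXn /= split2_w1 rmorphD /= !xtotalSqX.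
  by rewrite sqrrD (mulrn_pchar pchar_HGr) addr0 addrACA.
- rewrite /= totalSq_w2 !rmorphD rmorphM rmorphXn /= split2_w1 split2_w2.
  by rewrite rmorphM /= !xtotalSqX; ring.
Qed.

Lemma split2_Sq i p : split2 (Sq i p) = xSq i (split2 p).
Proof.
rewrite [RHS](mlinextE (xSq i \o split2)) /Sq (raddf_sum split2) /=.
apply: eq_bigr => m _; rewrite linearZ /=; congr (_ *: _).
rewrite wcompE wdeg_mnmwgt /split2 -pihomog_mPo -/split2 split2_totalSq.
by rewrite (xSq_homog i (dhomog_XS _ m)).
Qed.

Lemma split2_Q n p : split2 (Q n p) = milnorQ xSq n (split2 p).
Proof. exact: milnorQ_morph split2_Sq n p. Qed.

Lemma wbar_pairE k : wbar_pair k = (wbar k, wbar k.+1).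
Proof. by rewrite /wbar /=; case: (wbar_pair k). Qed.

Lemma wbarSS k : wbar k.+2 = - (w1 * wbar k.+1 + w2 * wbar k).
Proof. by rewrite [LHS]/wbar /= wbar_pairE. Qed.

Definition psum2 (j : nat) : HGr := x0 ^+ j + x1 ^+ j.

Lemma psum2SSS j : psum2 j.+3 = (x0 + x1) * psum2 j.+2 - x0 * x1 * psum2 j.+1.
Proof. by rewrite /psum2 !exprS; ring. Qed.

Lemma split2_w1_wbar k : split2 (w1 * wbar k) = psum2 k.+1.
Proof.
suff [] : split2 (w1 * wbar k) = psum2 k.+1 /\
          split2 (w1 * wbar k.+1) = psum2 k.+2 by [].
elim: k => [|k [IHk IHk1]]; split=> //.
- by rewrite mulr1 split2_w1 /psum2 !expr1.
- rewrite mulrN (oppr_pchar2 pchar_HGr) rmorphM /= split2_w1 /psum2 -expr2.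
  by rewrite sqrrD (mulrn_pchar pchar_HGr) addr0.
rewrite wbarSS mulrN (oppr_pchar2 pchar_HGr) mulrDr [w1 * (w2 * _)]mulrCA.
rewrite rmorphD /= [split2 (w1 * _)]rmorphM /= [split2 (w2 * _)]rmorphM /=.
by rewrite IHk IHk1 split2_w1 split2_w2 psum2SSS (oppr_pchar2 pchar_HGr).
Qed.

Lemma xQ_psum2 n e : milnorQ xSq n (psum2 e) = psum2 (e + 2 ^ n.+1 - 1) *+ e.
Proof.
have pchar_F2 : 2 \in [pchar 'F_2] by apply: pchar_Fp.
by rewrite (milnorQD (@xSq_zmod_morphism _ _)) !(xQ_Xn pchar_F2) -mulrnDl.
Qed.

Theorem proposition5p7 (n l : nat) :
  Q n (w1 * wbar (2 * l)) = w1 * wbar (2 ^ n.+1 - 1 + 2 * l).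
Proof.
apply: split2_inj; rewrite split2_Q !split2_w1_wbar xQ_psum2.
rewrite (mulrn_pchar2 _ _ pchar_HGr) /= oddM /= mulr1n.
by congr psum2; have := expn_gt0 2 n.+1; lia.
Qed.
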